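(* Let $\mathfrak{G}$ be a groupoid of germs of a pseudogroup $\widetilde{\mathfrak{G}}$ acting on a metric space $\mathfrak{G}^{(0)}$. Let $C\subset\mathfrak{G}$ be a compact set and let $\mathcal{U}\subset\widetilde{\mathfrak{G}}$ be a covering of $C$ (each $U\in\mathcal{U}$ viewed as the open set of its germs). Then there exists $\epsilon>0$ such that for every $g\in C$ there exists $U\in\mathcal{U}$ such that $g$ is $\epsilon$-contained in $U$.
   Context: A pseudogroup $\widetilde{\mathfrak{G}}$ on a space $\mathfrak{G}^{(0)}$ is a set of homeomorphisms between open subsets, containing the identity, closed under composition, inverses, restriction to open subsets and unions. A germ is an equivalence class of pairs $(F,x)$, $F\in\widetilde{\mathfrak{G}}$, $x\in\mathrm{Dom}(F)$, where $(F_1,x)=(F_2,x)$ if $F_1,F_2$ agree near $x$; the set $\mathfrak{G}$ of germs is a groupoid with origin $\mathsf{o}(F,x)=x$, target $\mathsf{t}(F,x)=F(x)$, and topology with basis the sets $\{(F,x):x\in\mathrm{Dom}(F)\}$. Each $U\in\widetilde{\mathfrak{G}}$ is identified with the set of its germs; $\mathsf{o}(U)$ denotes its domain. For $U\in\widetilde{\mathfrak{G}}$ and $g\in\mathfrak{G}$, $g$ is $\epsilon$-contained in $U$ if the $\epsilon$-neighborhood of $\mathsf{o}(g)$ is contained in $\mathsf{o}(U)$. *)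

From Stdlib Require Import Reals List.
Open Scope R_scope.
Set Implicit Arguments.

Section Germs.
Variable X : Type.
Variable d : X -> X -> R.

Definition is_metric : Prop :=
  (forall x y, 0 <= d x y) /\ (forall x y, d x y = 0 <-> x = y) /\
  (forall x y, d x y = d y x) /\ (forall x y z, d x z <= d x y + d y z).

Definition mopen (A : X -> Prop) : Prop :=
  forall x, A x -> exists r, 0 < r /\ forall y, d x y < r -> A y.

(* partial maps: a domain and a (total) function, meaningful on the domain *)
Record pmap := PMap { pdom : X -> Prop; pfun : X -> X }.

Definition pimage (F : pmap) (y : X) : Prop := exists x, pdom F x /\ pfun F x = y.

Definition cont_on (D : X -> Prop) (f : X -> X) : Prop :=
  forall x, D x -> forall e, 0 < e -> exists del, 0 < del /\
    forall y, D y -> d x y < del -> d (f x) (f y) < e.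

Definition pinv_of (G F : pmap) : Prop :=
  (forall y, pdom G y <-> pimage F y) /\
  (forall x, pdom F x -> pfun G (pfun F x) = x) /\
  (forall y, pdom G y -> pfun F (pfun G y) = y).

Definition is_phomeo (F : pmap) : Prop :=
  mopen (pdom F) /\ mopen (pimage F) /\ cont_on (pdom F) (pfun F) /\
  exists G, pinv_of G F /\ cont_on (pdom G) (pfun G).

Definition pid : pmap := PMap (fun _ => True) (fun x => x).
Definition pcomp (F G : pmap) : pmap :=
  PMap (fun x => pdom G x /\ pdom F (pfun G x)) (fun x => pfun F (pfun G x)).
Definition prestr (F : pmap) (A : X -> Prop) : pmap :=
  PMap (fun x => pdom F x /\ A x) (pfun F).

(* a pseudogroup: a set of partial homeomorphisms between open subsets,
   containing the identity, closed under composition, inverses, restriction to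
   open subsets and unions; partial maps are identified when they have the
   same domain and agree on it. *)
Definition pseudogroup (PG : pmap -> Prop) : Prop :=
  (forall F, PG F -> is_phomeo F) /\
  (forall F G, PG F -> (forall x, pdom G x <-> pdom F x) ->
     (forall x, pdom F x -> pfun G x = pfun F x) -> PG G) /\
  PG pid /\
  (forall F G, PG F -> PG G -> PG (pcomp F G)) /\
  (forall F, PG F -> exists G, PG G /\ pinv_of G F) /\
  (forall F A, PG F -> mopen A -> PG (prestr F A)) /\
  (forall (I : Type) (Fi : I -> pmap) (F : pmap),
     (forall i, PG (Fi i)) -> is_phomeo F ->
     (forall x, pdom F x <-> exists i, pdom (Fi i) x) ->
     (forall i x, pdom (Fi i) x -> pfun F x = pfun (Fi i) x) -> PG F).

Variable PG : pmap -> Prop.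

Definition valid_pair (p : pmap * X) : Prop := PG (fst p) /\ pdom (fst p) (snd p).

Definition germ_rel (p q : pmap * X) : Prop :=
  snd p = snd q /\ exists r, 0 < r /\ forall y, d (snd p) y < r ->
    pdom (fst p) y /\ pdom (fst q) y /\ pfun (fst p) y = pfun (fst q) y.

(* a germ is an equivalence class of valid pairs *)
Record germ := Germ {
  gset : pmap * X -> Prop;
  gset_class : exists p, valid_pair p /\
     forall q, gset q <-> (valid_pair q /\ germ_rel p q) }.

(* g belongs to U (U identified with the set of its germs) *)
Definition germ_in (U : pmap) (g : germ) : Prop := exists x, gset g (U, x).

Definition germ_origin (g : germ) (x : X) : Prop := exists F, gset g (F, x).

(* open sets of germs: unions of basic sets {(F,x) : x in Dom F}, F in PG *)
Definition germ_open (W : germ -> Prop) : Prop :=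
  forall g, W g -> exists F, PG F /\ germ_in F g /\ forall h, germ_in F h -> W h.

Definition germ_compact (C : germ -> Prop) : Prop :=
  forall (I : Type) (W : I -> germ -> Prop),
    (forall i, germ_open (W i)) -> (forall g, C g -> exists i, W i g) ->
    exists l : list I, forall g, C g -> exists i, In i l /\ W i g.

Definition eps_contained (eps : R) (g : germ) (U : pmap) : Prop :=
  forall x, germ_origin g x -> forall y, d x y < eps -> pdom U y.

End Germs.

(* For every germ g of C pick U in the cover containing it and a radius r with
   B(o(g), 2r) inside o(U).  The restrictions of these U to B(o(g), r) are basic
   open sets of germs covering C, so finitely many of them suffice.  The least
   of their radii works as eps: a germ in the restriction of U to B(x, r) has
   its origin y within r of x, hence B(y, eps) lies in B(x, 2r), inside o(U). *)
From Stdlib Require Import Reals List Lra.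
Open Scope R_scope.

Lemma list_pos_lower_bound (I : Type) (r : I -> R) (l : list I) :
  (forall i, 0 < r i) -> exists e, 0 < e /\ forall i, In i l -> e <= r i.
Proof.
  intros r_pos; induction l as [|a l [e [e_pos e_le]]].
  - exists 1; split; [lra | intros i []].
  - exists (Rmin (r a) e); split; [now apply Rmin_pos|].
    intros i [<- | Hi].
    + apply Rmin_l.
    + eapply Rle_trans; [apply Rmin_r | now apply e_le].
Qed.

Section EpsContainment.
Context {X : Type} {d : X -> X -> R} {PG : pmap X -> Prop}.
Hypotheses (Hd : is_metric d) (HPG : pseudogroup d PG).

Definition mball (x : X) (r : R) : X -> Prop := fun y => d x y < r.

Lemma mball_open x r : mopen d (mball x r).
Proof.
  destruct Hd as (_ & _ & _ & Htri).
  intros y Hy; exists (r - d x y); split; [unfold mball in Hy; lra|].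
  intros z Hz; unfold mball in *; specialize (Htri x y z); lra.
Qed.

Lemma mball_center x r : 0 < r -> mball x r x.
Proof.
  destruct Hd as (_ & Hzero & _).
  intros r_pos; unfold mball; now rewrite (proj2 (Hzero x x) eq_refl).
Qed.

Lemma gset_origin_unique {g : germ d PG} {F G x y} :
  gset g (F, x) -> gset g (G, y) -> x = y.
Proof.
  destruct (gset_class g) as (p & _ & Hp).
  intros [_ [Ex _]]%Hp [_ [Ey _]]%Hp; simpl in *; congruence.
Qed.

Lemma germ_in_open F : PG F -> germ_open (germ_in (d := d) (PG := PG) F).
Proof. intros HF g Hg; exists F; auto. Qed.

Lemma gset_restr (g : germ d PG) F A x :
  gset g (F, x) -> mopen d A -> A x -> gset g (prestr F A, x).
Proof.
  destruct HPG as (_ & _ & _ & _ & _ & Hres & _).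
  destruct (gset_class g) as (p & _ & Hp).
  intros [[HF Fx] [Ex (r1 & r1_pos & Hr1)]]%Hp A_open Ax; simpl in *.
  destruct (A_open x Ax) as (r2 & r2_pos & Hr2).
  apply Hp; split; [split; simpl; auto|].
  split; [exact Ex|].
  exists (Rmin r1 r2); split; [now apply Rmin_pos|].
  intros y Hy; simpl.
  assert (y_r1 : d (snd p) y < r1) by (eapply Rlt_le_trans; [exact Hy | apply Rmin_l]).
  assert (y_r2 : d x y < r2) by (rewrite <- Ex; eapply Rlt_le_trans; [exact Hy | apply Rmin_r]).
  destruct (Hr1 y y_r1) as (? & ? & ?); auto.
Qed.

Context {Ucov : pmap X -> Prop}.
Hypothesis HU : forall U, Ucov U -> PG U.

Record cover_ball := CoverBall {
  cb_map : pmap X;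
  cb_center : X;
  cb_radius : R;
  cb_cov : Ucov cb_map;
  cb_radius_pos : 0 < cb_radius;
  cb_double_ball : forall y, mball cb_center (2 * cb_radius) y -> pdom cb_map y }.

Definition cover_ball_germs (b : cover_ball) : germ d PG -> Prop :=
  germ_in (d := d) (PG := PG) (prestr (cb_map b) (mball (cb_center b) (cb_radius b))).

Lemma cover_ball_germs_open b : germ_open (cover_ball_germs b).
Proof.
  destruct HPG as (_ & _ & _ & _ & _ & Hres & _).
  apply germ_in_open, Hres; [apply HU, cb_cov | apply mball_open].
Qed.

Lemma cover_ball_of_germ_in {g : germ d PG} {U} :
  Ucov U -> germ_in U g -> exists b, cover_ball_germs b g.
Proof.
  intros HUc [x Hgx].
  destruct (gset_class g) as (p & _ & Hp).
  destruct (proj1 (Hp _) Hgx) as [[_ Ux] _]; simpl in Ux.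
  destruct HPG as (Hph & _).
  destruct (proj1 (Hph U (HU U HUc)) x Ux) as (r & r_pos & Hr).
  assert (Hdouble : forall y, mball x (2 * (r / 2)) y -> pdom U y)
    by (intros y Hy; apply Hr; unfold mball in Hy; lra).
  assert (half_pos : 0 < r / 2) by lra.
  exists {| cb_cov := HUc; cb_radius_pos := half_pos; cb_double_ball := Hdouble |}.
  exists x.
  apply gset_restr; [exact Hgx | apply mball_open | now apply mball_center].
Qed.

Lemma eps_contained_of_cover_ball {g : germ d PG} {b eps} :
  eps <= cb_radius b -> cover_ball_germs b g -> eps_contained eps g (cb_map b).
Proof.
  destruct Hd as (_ & _ & _ & Htri).
  intros eps_le [y Hgy] z [F Hgz] w Hw.
  rewrite <- (gset_origin_unique Hgy Hgz) in Hw.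
  destruct (gset_class g) as (p & _ & Hp).
  destruct (proj1 (Hp _) Hgy) as [[_ [_ Hxy]] _]; simpl in Hxy.
  apply cb_double_ball; unfold mball in *.
  specialize (Htri (cb_center b) y w); lra.
Qed.

End EpsContainment.

Theorem lemma2p1p4 (X : Type) (d : X -> X -> R) (Hd : is_metric d)
  (PG : pmap X -> Prop) (HPG : pseudogroup d PG)
  (C : germ d PG -> Prop) (HC : germ_compact C)
  (Ucov : pmap X -> Prop) (HU : forall U, Ucov U -> PG U)
  (Hcov : forall g, C g -> exists U, Ucov U /\ germ_in U g) :
  exists eps, 0 < eps /\
    forall g, C g -> exists U, Ucov U /\ eps_contained eps g U.
Proof.
  destruct (HC _ (cover_ball_germs (PG := PG) (Ucov := Ucov))) as [l Hl].
  - exact (cover_ball_germs_open Hd HPG HU).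
  - intros g Hg; destruct (Hcov g Hg) as (U & HUc & HgU).
    exact (cover_ball_of_germ_in Hd HPG HU HUc HgU).
  - destruct (list_pos_lower_bound _ cb_radius l cb_radius_pos) as (eps & eps_pos & eps_le).
    exists eps; split; [exact eps_pos|].
    intros g Hg; destruct (Hl g Hg) as (b & Hb & Hgb).
    exists (cb_map b); split; [apply cb_cov|].
    exact (eps_contained_of_cover_ball Hd (eps_le b Hb) Hgb).
Qed.
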